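(* Let $\delta>0$, $n\ge1$, let $w\in\mathbb{R}^n$ satisfy $w_1\ge w_2\ge\dots\ge w_n\ge0$, and let $\tilde w$ be its sparsification with respect to $P_{n,\delta}$. Then for every $v\in\mathbb{R}^n_{\ge0}$, $\mathrm{cost}(\tilde w;v)\le\mathrm{cost}(w;v)\le(1+\delta)\,\mathrm{cost}(\tilde w;v)$.
   Context: $P_{n,\delta}=\{\min\{\lceil(1+\delta)^s\rceil,n\}:s\in\mathbb{Z}_{\ge0}\}$; for $\ell\in P_{n,\delta}$ with $\ell<n$, $\mathrm{next}(\ell)$ is the smallest element of $P_{n,\delta}$ larger than $\ell$. The sparsification $\tilde w\in\mathbb{R}^n$ is defined by $\tilde w_i=w_i$ if $i\in P_{n,\delta}$, and $\tilde w_i=w_{\mathrm{next}(\ell)}$ if $\ell\in P_{n,\delta}$ and $\ell<i<\mathrm{next}(\ell)$. For a non-increasing $u$, $\mathrm{cost}(u;v)=\sum_{i=1}^n u_iv^\downarrow_i$, with $v^\downarrow$ the non-increasing rearrangement of $v$. *)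

From HB Require Import structures.
From mathcomp Require Import all_boot all_order all_algebra.
From mathcomp Require Import boolp reals.
Set Implicit Arguments. Unset Strict Implicit. Unset Printing Implicit Defensive.
Import Order.TTheory GRing.Theory Num.Theory.
Local Open Scope ring_scope.

(* Vectors in R^n are represented as functions nat -> R, using only the
   (1-based) indices 1..n. *)

Section Sparsification.
Variable R : realType.

Definition inP (n : nat) (delta : R) (l : nat) : bool :=
  `[< exists s : nat, (l%:Z) = Order.min (Num.ceil ((1 + delta) ^+ s)) (n%:Z) >].

(* next(l): the smallest element of P_{n,delta} larger than l
   (for l < n; n is always in P_{n,delta}, used as default). *)
Definition nextP (n : nat) (delta : R) (l : nat) : nat :=
  head n [seq j <- iota l.+1 (n - l) | inP n delta j].

Definition prevP (n : nat) (delta : R) (i : nat) : nat :=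
  last 0%N [seq j <- iota 1 i.-1 | inP n delta j].

(* sparsification: w~_i = w_i if i in P; otherwise w~_i = w_{next(l)} where
   l in P with l < i < next(l), i.e. l is the largest element of P below i. *)
Definition sparsify (n : nat) (delta : R) (w : nat -> R) (i : nat) : R :=
  if inP n delta i then w i else w (nextP n delta (prevP n delta i)).

Definition vdown (n : nat) (v : nat -> R) (i : nat) : R :=
  nth 0 (sort (fun x y : R => y <= x) [seq v j | j <- iota 1 n]) i.-1.

Definition cost (n : nat) (u v : nat -> R) : R :=
  \sum_(1 <= i < n.+1) u i * vdown n v i.

End Sparsification.

(* For fixed v the cost is linear in the weights, and by Abel summation a
   nonincreasing nonnegative w is a nonnegative combination of the step vectors
   1_[1,m], with coefficients w_m - w_(m+1).  The sparsified weight at i is w at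
   the least grid point >= i, so the lower bound is immediate, and for the upper
   bound it suffices to compare the two costs on a step 1_[1,m]: there cost(w;v)
   is the sum U(m) of the m largest entries of v, while the sparsified step is 1
   at least on [1,p] for the largest grid point p <= m, which satisfies
   m <= (1+delta) p.  Prefix averages of a nonincreasing sequence decrease, so
   U(m) <= (m/p) U(p) <= (1+delta) U(p). *)

From HB Require Import structures.
From mathcomp Require Import all_boot all_order all_algebra.
From mathcomp Require Import boolp reals.
From mathcomp Require Import zify lra.
Import Order.TTheory GRing.Theory Num.Theory.
Local Open Scope ring_scope.

Set Implicit Arguments.
Unset Strict Implicit.
Unset Printing Implicit Defensive.

Lemma big_nat_mkcond_geq (V : nmodType) n k (F : nat -> V) : (1 <= k <= n.+1)%N ->
  \sum_(1 <= m < n.+1) (if (k <= m)%N then F m else 0) = \sum_(k <= m < n.+1) F m.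
Proof.
move=> /andP[k1 kn]; rewrite (@big_cat_nat _ _ _ k) //= big_nat_cond big1 ?add0r.
  by apply: eq_big_nat => m /andP[km _]; rewrite km.
by move=> m /andP[/andP[_ mk] _]; rewrite leqNgt mk.
Qed.

Lemma big_nat_mkcond_leq (V : nmodType) n m (F : nat -> V) : (m <= n)%N ->
  \sum_(1 <= i < n.+1) (if (i <= m)%N then F i else 0) = \sum_(1 <= i < m.+1) F i.
Proof. by move=> mn; rewrite [RHS](big_nat_widen _ _ n.+1) // [RHS]big_mkcond. Qed.

Section AbelSummation.
Variables (R : pzRingType) (n : nat) (w : nat -> R).

Definition jump m := w m - (if (m < n)%N then w m.+1 else 0).

Lemma sum_jump k : (1 <= k <= n)%N -> \sum_(k <= m < n.+1) jump m = w k.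
Proof.
move=> /andP[_ kn]; pose w' j := if (j <= n)%N then w j else 0.
have -> : \sum_(k <= m < n.+1) jump m = - \sum_(k <= m < n.+1) (w' m.+1 - w' m).
  rewrite -sumrN; apply: eq_big_nat => m /andP[_]; rewrite ltnS => mn.
  by rewrite opprB /jump /w' mn.
by rewrite telescope_sumr 1?ltnW // /w' ltnn kn sub0r opprK.
Qed.

Lemma sum_mul_jump (f : nat -> nat) (c : nat -> R) :
    (forall i, (1 <= i <= n)%N -> (1 <= f i <= n)%N) ->
  \sum_(1 <= i < n.+1) w (f i) * c i =
  \sum_(1 <= m < n.+1) jump m * \sum_(1 <= i < n.+1) (if (f i <= m)%N then c i else 0).
Proof.
move=> f_in; transitivity (\sum_(1 <= i < n.+1) \sum_(1 <= m < n.+1)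
    (if (f i <= m)%N then jump m * c i else 0)).
  apply: eq_big_nat => i hi; have /andP[f1 fn] := f_in i hi.
  rewrite big_nat_mkcond_geq; last by rewrite f1 ltnW.
  by rewrite -mulr_suml sum_jump // f1.
rewrite exchange_big_nat; apply: eq_bigr => m _; rewrite mulr_sumr.
by apply: eq_bigr => i _; case: ifP; rewrite ?mulr0.
Qed.

End AbelSummation.

Lemma prefix_sum_mul_le (R : realDomainType) (u : nat -> R) p m :
    (forall i j, (1 <= i <= j)%N -> (j <= m)%N -> u j <= u i) -> (1 <= p <= m)%N ->
  p%:R * \sum_(1 <= i < m.+1) u i <= m%:R * \sum_(1 <= i < p.+1) u i.
Proof.
move=> u_noninc /andP[p1 pm]; set Up := \sum_(1 <= i < p.+1) u i.
set T := \sum_(p.+1 <= i < m.+1) u i.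
have -> : \sum_(1 <= i < m.+1) u i = Up + T by rewrite (@big_cat_nat _ _ _ p.+1).
have T_le : T <= (m - p)%:R * u p.
  rewrite mulr_natl -subSS -sumr_const_nat.
  by apply: ler_sum_nat => i /andP[pi im]; apply: u_noninc; lia.
have Up_ge : p%:R * u p <= Up.
  rewrite mulr_natl -[X in _ *+ X]subn0 -subSS -sumr_const_nat.
  by apply: ler_sum_nat => i /andP[i1 ip]; apply: u_noninc; lia.
have p0 : 0 <= p%:R :> R := ler0n _ _.
have mp0 : 0 <= (m - p)%:R :> R := ler0n _ _.
rewrite natrB // in T_le mp0; nra.
Qed.

Section Reindexing.
Variables (R : realDomainType) (n : nat) (w u : nat -> R) (g : nat -> nat).
Hypothesis w_noninc : forall i j, (1 <= i <= j)%N -> (j <= n)%N -> w j <= w i.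
Hypothesis u_ge0 : forall i, (1 <= i <= n)%N -> 0 <= u i.

Lemma reindex_sum_le : (forall i, (1 <= i <= n)%N -> (i <= g i <= n)%N) ->
  \sum_(1 <= i < n.+1) w (g i) * u i <= \sum_(1 <= i < n.+1) w i * u i.
Proof.
move=> g_in; apply: ler_sum_nat => i; rewrite ltnS => i_in.
have gi := g_in i i_in; apply: ler_wpM2r; first exact: u_ge0.
by apply: w_noninc; lia.
Qed.

Hypothesis wn_ge0 : 0 <= w n.
Hypothesis u_noninc : forall i j, (1 <= i <= j)%N -> (j <= n)%N -> u j <= u i.

Lemma jump_ge0 m : (1 <= m <= n)%N -> 0 <= jump n w m.
Proof.
move=> /andP[m1 mn]; rewrite /jump; case: ltnP => [mlt|nm].
  by rewrite subr_ge0; apply: w_noninc; lia.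
by rewrite subr0 (_ : m = n) //; apply/eqP; rewrite eqn_leq mn.
Qed.

Lemma sum_le_reindex (c : R) :
    (forall i, (1 <= i <= n)%N -> (1 <= g i <= n)%N) ->
    (forall m, (1 <= m <= n)%N -> exists p,
       [/\ (1 <= p <= m)%N, m%:R <= c * p%:R & forall i, (1 <= i <= p)%N -> (g i <= m)%N]) ->
  \sum_(1 <= i < n.+1) w i * u i <= c * \sum_(1 <= i < n.+1) w (g i) * u i.
Proof.
move=> g_in coarse.
rewrite [leLHS](@sum_mul_jump _ _ _ id) // (sum_mul_jump _ _ g_in) mulr_sumr.
apply: ler_sum_nat => m /andP[m1 mlt]; rewrite ltnS in mlt.
have m_in : (1 <= m <= n)%N by rewrite m1.
rewrite mulrCA; apply: ler_wpM2l; first exact: jump_ge0.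
have [p [/andP[p1 pm] mcp g_le]] := coarse m m_in.
have p_gt0 : 0 < p%:R :> R by rewrite ltr0n.
have c_ge0 : 0 <= c by rewrite -(pmulr_lge0 _ p_gt0); apply: le_trans mcp.
have Up_ge0 : 0 <= \sum_(1 <= i < p.+1) u i.
  by rewrite big_nat_cond; apply: sumr_ge0 => i /andP[i_in _]; apply: u_ge0; lia.
have Up_le : \sum_(1 <= i < p.+1) u i <=
             \sum_(1 <= i < n.+1) (if (g i <= m)%N then u i else 0).
  rewrite -(@big_nat_mkcond_leq _ n) ?(leq_trans pm) //.
  apply: ler_sum_nat => i i_in; case: ifP => ip; first by rewrite g_le ?lexx //; lia.
  by case: ifP => // _; apply: u_ge0; lia.
have Um_le : \sum_(1 <= i < m.+1) u i <= c * \sum_(1 <= i < p.+1) u i.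
  rewrite -(ler_pM2l p_gt0) mulrA [_ * c]mulrC.
  apply: le_trans (prefix_sum_mul_le _ _) (ler_wpM2r Up_ge0 mcp).
    by move=> i j ij jm; apply: u_noninc; lia.
  by rewrite p1.
by rewrite big_nat_mkcond_leq //; apply: le_trans Um_le (ler_wpM2l c_ge0 Up_le).
Qed.

End Reindexing.

Lemma nonincreasing_in (R : numDomainType) n (f : nat -> R) :
    (forall i, (1 <= i)%N -> (i < n)%N -> f i.+1 <= f i) ->
  forall i j, (1 <= i <= j)%N -> (j <= n)%N -> f j <= f i.
Proof.
move=> step i j /andP[i1 ij] jn.
apply: (@homo_leq_in _ [pred k | 1 <= k <= n]%N f (fun x y => y <= x)) => //.
- by move=> y x z yx zy; apply: le_trans zy yx.
- by move=> a b /andP[a1 _] /andP[_ bn] k /andP[ak kb]; rewrite inE; lia.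
- by move=> k /andP[k1 _] /andP[_ kn]; apply: step.
- by rewrite inE i1; lia.
- by rewrite inE jn; lia.
Qed.

Lemma bernoulli_le (R : realDomainType) (x : R) s : 0 <= x -> 1 + s%:R * x <= (1 + x) ^+ s.
Proof.
move=> x_ge0; elim: s => [|s IH]; first by rewrite mul0r addr0 expr0.
have s_ge0 : 0 <= s%:R :> R := ler0n _ _.
rewrite exprS -natr1; apply: le_trans (ler_wpM2l _ IH); nra.
Qed.

Lemma exists_expr_gt (R : archiRealFieldType) (x y : R) : 0 < x -> exists s, y < (1 + x) ^+ s.
Proof.
move=> x_gt0; pose s := Num.bound (`|y| / x); exists s.
have := archi_boundP (divr_ge0 (normr_ge0 y) (ltW x_gt0)); rewrite ltr_pdivrMr // => ys.
have := bernoulli_le s (ltW x_gt0); have := ler_norm y; lra.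
Qed.

Lemma inP_n (R : realType) (delta : R) n : 0 < delta -> inP n delta n.
Proof.
move=> delta_gt0; apply/asboolP.
have [s ns] := exists_expr_gt n%:R delta_gt0; exists s.
rewrite min_r //; apply: le_trans (le_ceil (ltW ns)).
by rewrite -[n%:R]/(n%:~R) intrKceil.
Qed.

Lemma inP_approx (R : realType) (delta : R) n m : 0 < delta -> (1 <= m <= n)%N ->
  exists p, [/\ (1 <= p <= m)%N, inP n delta p & m%:R <= (1 + delta) * p%:R].
Proof.
move=> delta_gt0 /andP[m1 mn].
(* p is the ceiling of (1+delta)^(s-1), for the least s with m < (1+delta)^s. *)
have ex_s : exists s, m%:R < (1 + delta) ^+ s := exists_expr_gt m%:R delta_gt0.
case: (ex_minnP ex_s) => s ms s_min.
have s_gt0 : (0 < s)%N.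
  by rewrite lt0n; apply: contraTneq ms => ->; rewrite expr0 -leNgt ler1n.
have a_le_m : (1 + delta) ^+ s.-1 <= m%:R.
  by rewrite leNgt; apply/negP => /s_min; rewrite -ltnS prednK // ltnn.
have a_ge1 : 1 <= (1 + delta) ^+ s.-1 by apply: exprn_ege1; lra.
set c := Num.ceil ((1 + delta) ^+ s.-1).
have c_gt0 : 0 < c by rewrite ceil_gt0; lra.
have c_le_m : c <= m%:Z by rewrite ceil_le_int.
exists `|c|%N; have cE : (`|c|%N)%:Z = c by rewrite gez0_abs // ltW.
split.
- by rewrite -ltz_nat -lez_nat cE c_gt0.
- apply/asboolP; exists s.-1; rewrite cE min_l //.
  by apply: le_trans c_le_m _; rewrite lez_nat.
- rewrite -[(`|c|%N)%:R]/((`|c|%N)%:Z%:~R : R) cE.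
  have := ceil_ge ((1 + delta) ^+ s.-1); rewrite -/c => a_le_c.
  move: ms; rewrite -(prednK s_gt0) exprS => ms.
  apply: (le_trans (ltW ms)); apply: ler_wpM2l a_le_c; lra.
Qed.

Lemma last_filter_iota1 (p : pred nat) k :
  (last 0%N [seq j <- iota 1 k | p j] <= k)%N /\
  forall j, (last 0%N [seq j <- iota 1 k | p j] < j <= k)%N -> ~~ p j.
Proof.
elim: k => [|k [le_k above_k]]; first by split => // j; lia.
rewrite -[k.+1]addn1 iotaD filter_cat add1n /=; case: ifP => pk /=.
  by rewrite last_cat /=; split => [|j]; lia.
rewrite cats0; split => [|j /andP[lj]]; first lia.
rewrite addn1 leq_eqVlt ltnS => /orP[/eqP-> | jk]; first by rewrite pk.
by apply: above_k; rewrite lj.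
Qed.

Lemma head_filter_iota (p : pred nat) d a c : (exists2 j, (a <= j < a + c)%N & p j) ->
  [/\ (a <= head d [seq j <- iota a c | p j] < a + c)%N,
      p (head d [seq j <- iota a c | p j]) &
      forall j, (a <= j < head d [seq j <- iota a c | p j])%N -> ~~ p j].
Proof.
elim: c a => [|c IH] a [j j_in pj]; first by lia.
rewrite /=; case: ifP => pa /=; first by split => //; [lia | move=> i; lia].
have [|h_in ph below_h] := IH a.+1.
  exists j => //; have : j != a by apply: contraFneq pa => <-.
  lia.
split => // [|i /andP[ai ih]]; first lia.
by move: ai; rewrite leq_eqVlt => /orP[/eqP<- | ai]; [rewrite pa | apply: below_h; rewrite ai].
Qed.

Definition sparse_index (R : realType) n (delta : R) i :=
  if inP n delta i then i else nextP n delta (prevP n delta i).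

Lemma sparsifyE (R : realType) n (delta : R) w i :
  sparsify n delta w i = w (sparse_index n delta i).
Proof. by rewrite /sparsify /sparse_index; case: ifP. Qed.

Lemma sparse_index_spec (R : realType) n (delta : R) i : 0 < delta -> (1 <= i <= n)%N ->
  [/\ (i <= sparse_index n delta i)%N, (sparse_index n delta i <= n)%N &
      forall q, inP n delta q -> (i <= q <= n)%N -> (sparse_index n delta i <= q)%N].
Proof.
move=> delta_gt0 i_in; rewrite /sparse_index; case: ifP => Pi.
  by split => [||q _]; lia.
rewrite /nextP /prevP.
have [le_l above_l] := last_filter_iota1 (inP n delta) i.-1.
set l := last _ _ in le_l above_l *.
have [|h_in Ph below_h] := @head_filter_iota (inP n delta) n l.+1 (n - l).
  by exists n; [lia | apply: inP_n].
set h := head _ _ in h_in Ph below_h *.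
have ih : (i <= h)%N.
  by rewrite leqNgt; apply/negP => hi; have := above_l h; rewrite Ph; lia.
split => [||q Pq q_in]; try lia.
by rewrite leqNgt; apply/negP => qh; have := below_h q; rewrite Pq; lia.
Qed.

Lemma vdown_ge0 (R : realType) n (v : nat -> R) i :
  (forall j, (1 <= j <= n)%N -> 0 <= v j) -> (1 <= i <= n)%N -> 0 <= vdown n v i.
Proof.
move=> v_ge0 i_in; rewrite /vdown; set s := sort _ _.
have size_s : size s = n by rewrite size_sort size_map size_iota.
have : nth 0 s i.-1 \in s by apply: mem_nth; rewrite size_s; lia.
by rewrite mem_sort => /mapP[j]; rewrite mem_iota => j_in ->; apply: v_ge0; lia.
Qed.

Lemma vdown_noninc (R : realType) n (v : nat -> R) i j :
  (1 <= i <= j)%N -> (j <= n)%N -> vdown n v j <= vdown n v i.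
Proof.
move=> ij jn; rewrite /vdown; set s := sort _ _.
have size_s : size s = n by rewrite size_sort size_map size_iota.
have s_sorted : sorted (fun x y : R => y <= x) s.
  by apply: sort_sorted => x y; apply: le_total.
have ge_trans : transitive (fun x y : R => y <= x).
  by move=> x y z /= yx zy; apply: le_trans zy yx.
apply: (sorted_leq_nth ge_trans (fun x => lexx x) 0 s_sorted); rewrite ?inE ?size_s; lia.
Qed.

Theorem mainTheorem12 (R : realType) (delta : R) (n : nat) (w v : nat -> R) :
  0 < delta -> (1 <= n)%N ->
  (forall i : nat, (1 <= i)%N -> (i < n)%N -> w i.+1 <= w i) ->
  0 <= w n ->
  (forall i : nat, (1 <= i <= n)%N -> 0 <= v i) ->
  cost n (sparsify n delta w) v <= cost n w v /\
  cost n w v <= (1 + delta) * cost n (sparsify n delta w) v.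
Proof.
move=> delta_gt0 _ w_step wn_ge0 v_ge0.
have w_noninc := nonincreasing_in w_step.
have u_ge0 i : (1 <= i <= n)%N -> 0 <= vdown n v i by apply: vdown_ge0.
have g_spec i := @sparse_index_spec R n delta i delta_gt0.
have -> : cost n (sparsify n delta w) v =
    \sum_(1 <= i < n.+1) w (sparse_index n delta i) * vdown n v i.
  by apply: eq_bigr => i _; rewrite sparsifyE.
split.
  by apply: reindex_sum_le => // i /g_spec[-> ->].
apply: sum_le_reindex => //; first exact: vdown_noninc.
  by move=> i i_in; have [] := g_spec i i_in; lia.
move=> m m_in; have [p [p_in Pp m_le]] := inP_approx delta_gt0 m_in.
exists p; split => // i i_in.
have [|_ _ g_min] := g_spec i; first lia.
by apply: leq_trans (g_min p Pp _) _; lia.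
Qed.
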